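(* Let $m>n>0$ be integers, and let $a,b,x$ be real numbers with $|x|<m^m/(n^n(m-n)^{m-n})$. Set $$S_{m,n}(a,b,x)=\sum_{k=1}^\infty(ak+b)\frac{x^k}{\binom{mk}{nk}}.$$ Then $$S_{m,n}(a,b,x)=n\int_0^1T_{m,n}(a,b,x;t)\,dt,$$ where $$T_{m,n}(a,b,x;t)=t^{n-1}(1-t)^{m-n}x\,\frac{(a-b)t^n(1-t)^{m-n}x+a+b}{(1-t^n(1-t)^{m-n}x)^3}.$$ *)

From Stdlib Require Import Reals.
From Coquelicot Require Import Coquelicot.
Open Scope R_scope.

Definition S_term (m n : nat) (a b x : R) (k : nat) : R :=
  (a * INR k + b) * x ^ k / Binomial.C (m * k)%nat (n * k)%nat.

Definition T_fun (m n : nat) (a b x t : R) : R :=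
  t ^ (n - 1)%nat * (1 - t) ^ (m - n)%nat * x *
  (((a - b) * t ^ n * (1 - t) ^ (m - n)%nat * x + a + b) /
   (1 - t ^ n * (1 - t) ^ (m - n)%nat * x) ^ 3).

(* Since 1 / binom(M, N) = N * int_0^1 t^(N-1) (1-t)^(M-N) dt, the k-th term of the series is
   n * int_0^1 w(t) x c_(k-1) y(t)^(k-1) dt, where w(t) = t^(n-1) (1-t)^(m-n),
   y(t) = t^n (1-t)^(m-n) x and c_k = (k+1) (a (k+1) + b).  As
   sum_k c_k y^k = ((a-b) y + a + b) / (1-y)^3, summing under the integral gives T.  The
   interchange is justified by uniform convergence: by weighted AM-GM,
   t^n (1-t)^(m-n) <= n^n (m-n)^(m-n) / m^m, so the hypothesis on x keeps |y(t)| <= r < 1 on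
   [0, 1], where the partial sums of the power series are within O(N^2 r^N) of its sum. *)

From Stdlib Require Import Reals Lra Lia Factorial.
From Coquelicot Require Import Coquelicot.
Open Scope R_scope.

Lemma is_RInt_pow_01 (p : nat) :
  is_RInt (fun t => t ^ p) 0 1 (/ INR (S p)).
Proof.
assert (Hp : INR (S p) <> 0) by (apply not_0_INR; lia).
replace (/ INR (S p)) with (1 ^ S p / INR (S p) - 0 ^ S p / INR (S p))
  by (rewrite pow1, pow_i by lia; field; exact Hp).
apply (is_RInt_derive (fun t => t ^ S p / INR (S p))).
- intros t _. auto_derive; [easy|]. field. exact Hp.
- intros t _. apply (ex_derive_continuous (V := R_NormedModule)). auto_derive. easy.
Qed.

Lemma is_RInt_beta_recr (p q : nat) (I : R) :
  is_RInt (fun t => t ^ S p * (1 - t) ^ q) 0 1 I ->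
  is_RInt (fun t => t ^ p * (1 - t) ^ S q) 0 1 (INR (S q) / INR (S p) * I).
Proof.
intros HI.
assert (Hp : INR (S p) <> 0) by (apply not_0_INR; lia).
assert (Hboundary : is_RInt
    (fun t => INR (S p) * t ^ p * (1 - t) ^ S q - INR (S q) * t ^ S p * (1 - t) ^ q) 0 1
    (1 ^ S p * (1 - 1) ^ S q - 0 ^ S p * (1 - 0) ^ S q)).
{ apply (is_RInt_derive (fun t => t ^ S p * (1 - t) ^ S q)).
  - intros t _. auto_derive; [easy|].
    change (match p with 0%nat => 1 | S _ => INR p + 1 end) with (INR (S p)).
    change (match q with 0%nat => 1 | S _ => INR q + 1 end) with (INR (S q)).
    rewrite !S_INR. simpl. unfold Rminus. ring.
  - intros t _. apply (ex_derive_continuous (V := R_NormedModule)). auto_derive. easy. }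
rewrite Rminus_diag, !pow_i, Rmult_0_l, Rmult_0_r, Rminus_0_r in Hboundary by lia.
apply (is_RInt_ext (fun t => / INR (S p) * ((INR (S p) * t ^ p * (1 - t) ^ S q
   - INR (S q) * t ^ S p * (1 - t) ^ q) + INR (S q) * (t ^ S p * (1 - t) ^ q)))).
{ intros t _. cbn -[INR]. field. exact Hp. }
replace (INR (S q) / INR (S p) * I) with (/ INR (S p) * (0 + INR (S q) * I)) by (field; exact Hp).
exact (is_RInt_scal _ _ _ _ _ (is_RInt_plus _ _ _ _ _ _ Hboundary (is_RInt_scal _ _ _ _ _ HI))).
Qed.

Lemma is_RInt_beta (p q : nat) :
  is_RInt (fun t => t ^ p * (1 - t) ^ q) 0 1
    (INR (fact p) * INR (fact q) / INR (fact (p + q + 1))).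
Proof.
revert p; induction q as [|q IH]; intros p.
- apply (is_RInt_ext (fun t => t ^ p)); [intros t _; simpl; ring|].
  replace (p + 0 + 1)%nat with (S p) by lia.
  rewrite fact_simpl, mult_INR. simpl (INR (fact 0)).
  replace (INR (fact p) * 1 / (INR (S p) * INR (fact p))) with (/ INR (S p)).
  + apply is_RInt_pow_01.
  + field. split; apply not_0_INR; [apply fact_neq_0 | lia].
- replace (INR (fact p) * INR (fact (S q)) / INR (fact (p + S q + 1)))
    with (INR (S q) / INR (S p) * (INR (fact (S p)) * INR (fact q) / INR (fact (S p + q + 1)))).
  + apply is_RInt_beta_recr, IH.
  + replace (S p + q + 1)%nat with (p + S q + 1)%nat by lia.
    rewrite !fact_simpl, !mult_INR. field.
    split; apply not_0_INR; [apply fact_neq_0 | lia].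
Qed.

Lemma is_RInt_beta_binomial (N M : nat) : (0 < N)%nat -> (N <= M)%nat ->
  is_RInt (fun t => t ^ (N - 1) * (1 - t) ^ (M - N)) 0 1 (/ (INR N * Binomial.C M N)).
Proof.
intros HN HNM.
replace (/ (INR N * Binomial.C M N))
  with (INR (fact (N - 1)) * INR (fact (M - N)) / INR (fact (N - 1 + (M - N) + 1))).
- apply is_RInt_beta.
- replace (N - 1 + (M - N) + 1)%nat with M by lia.
  unfold Binomial.C.
  destruct N as [|N]; [lia|].
  replace (S N - 1)%nat with N by lia.
  rewrite fact_simpl, mult_INR.
  assert (Hfact : forall k, INR (fact k) <> 0) by (intros k; apply not_0_INR, fact_neq_0).
  field. repeat split; auto. apply not_0_INR. lia.
Qed.

Definition gf_coef (a b : R) (k : nat) : R := (INR k + 1) * (a * (INR k + 1) + b).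

(* From sum_k (k+1)^2 z^k = (1+z)/(1-z)^3 and sum_k (k+1) z^k = 1/(1-z)^2. *)
Definition gf (a b z : R) : R := ((a - b) * z + a + b) / (1 - z) ^ 3.

Definition gf_rem (a b : R) (N : nat) (z : R) : R :=
  let M := INR N + 2 in
  a * (M ^ 2 * (1 - z) ^ 2 + 2 * M * z * (1 - z) + z + z ^ 2)
  + b * (M * (1 - z) ^ 2 + z * (1 - z)).

Lemma gf_partial_sum (a b z : R) (N : nat) :
  (1 - z) ^ 3 * sum_n (fun k => gf_coef a b k * z ^ k) N
  = (a - b) * z + a + b - z ^ S N * gf_rem a b N z.
Proof.
induction N as [|N IH].
- rewrite sum_O. unfold gf_rem, gf_coef. simpl. ring.
- rewrite sum_Sn. cbn -[sum_n pow INR]. rewrite Rmult_plus_distr_l, IH.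
  unfold gf_rem, gf_coef. rewrite !S_INR. simpl. ring.
Qed.

Lemma Rabs_gf_rem_le (a b : R) (N : nat) (z : R) : Rabs z <= 1 ->
  Rabs (gf_rem a b N z) <= 26 * (Rabs a + Rabs b) * (INR N + 1) ^ 2.
Proof.
intros Hz. apply Rabs_le_between in Hz.
assert (HN := pos_INR N).
assert (Hsq : 0 <= (1 - z) ^ 2 <= 4) by (split; nra).
assert (Hzz : Rabs (z * (1 - z)) <= 2) by (apply Rabs_le; split; nra).
apply Rabs_le_between in Hzz.
assert (HA : Rabs ((INR N + 2) ^ 2 * (1 - z) ^ 2 + 2 * (INR N + 2) * z * (1 - z) + z + z ^ 2)
             <= 26 * (INR N + 1) ^ 2) by (apply Rabs_le; split; nra).
assert (HB : Rabs ((INR N + 2) * (1 - z) ^ 2 + z * (1 - z)) <= 26 * (INR N + 1) ^ 2)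
  by (apply Rabs_le; split; nra).
unfold gf_rem. cbv zeta.
eapply Rle_trans; [apply Rabs_triang|]. rewrite !Rabs_mult.
pose proof (Rabs_pos a). pose proof (Rabs_pos b).
nra.
Qed.

Definition gf_err (a b r : R) (N : nat) : R :=
  r ^ S N * (26 * (Rabs a + Rabs b) * (INR N + 1) ^ 2) / (1 - r) ^ 3.

Lemma Rabs_gf_sub_partial_sum_le (a b z r : R) (N : nat) : Rabs z <= r -> r < 1 ->
  Rabs (gf a b z - sum_n (fun k => gf_coef a b k * z ^ k) N) <= gf_err a b r N.
Proof.
intros Hzr Hr. unfold gf_err.
assert (Hz : 0 < 1 - z) by (apply Rabs_le_between in Hzr; lra).
assert (Herr : gf a b z - sum_n (fun k => gf_coef a b k * z ^ k) N
               = z ^ S N * gf_rem a b N z / (1 - z) ^ 3).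
{ apply (Rmult_eq_reg_l ((1 - z) ^ 3)); [|apply pow_nonzero; lra].
  rewrite Rmult_minus_distr_l, gf_partial_sum. unfold gf. field. lra. }
rewrite Herr. unfold Rdiv. rewrite !Rabs_mult, Rabs_inv, <- !RPow_abs.
assert (0 <= Rabs z) by apply Rabs_pos.
apply Rmult_le_compat.
- apply Rmult_le_pos; [apply pow_le; lra | apply Rabs_pos].
- left. apply Rinv_0_lt_compat, pow_lt, Rabs_pos_lt. lra.
- apply Rmult_le_compat; auto using pow_le, Rabs_pos, pow_incr.
  apply Rabs_gf_rem_le. lra.
- apply Rinv_le_contravar; [apply pow_lt; lra|].
  apply pow_incr. pose proof (Rle_abs z). rewrite Rabs_right; lra.
Qed.

Lemma is_lim_seq_inv_INR_succ : is_lim_seq (fun N => / (INR N + 1)) 0.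
Proof.
assert (H : is_lim_seq (fun N => INR (S N)) p_infty)
  by apply (is_lim_seq_incr_1 INR), is_lim_seq_INR.
apply is_lim_seq_inv in H; [|discriminate].
apply (is_lim_seq_ext _ _ _ (fun N => f_equal Rinv (S_INR N)) H).
Qed.

Lemma is_lim_seq_succ_ratio_pow (d : nat) :
  is_lim_seq (fun N => ((INR N + 2) / (INR N + 1)) ^ d) 1.
Proof.
assert (Hratio : is_lim_seq (fun N => (INR N + 2) / (INR N + 1)) 1).
{ pose proof (is_lim_seq_plus' _ _ _ _ (is_lim_seq_const 1) is_lim_seq_inv_INR_succ) as H.
  rewrite Rplus_0_r in H.
  eapply is_lim_seq_ext; [|exact H].
  intros N. cbv beta. pose proof (pos_INR N). field. lra. }
induction d as [|d IH].
- apply is_lim_seq_const.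
- pose proof (is_lim_seq_mult' _ _ _ _ Hratio IH) as H.
  rewrite Rmult_1_r in H. exact H.
Qed.

Lemma is_lim_seq_pow_mul_geom (d : nat) (r : R) : 0 < r < 1 ->
  is_lim_seq (fun N => (INR N + 1) ^ d * r ^ N) 0.
Proof.
intros Hr.
set (u := fun N => (INR N + 1) ^ d * r ^ N).
assert (Hu : forall N, u N <> 0).
{ intros N. pose proof (pos_INR N).
  apply Rmult_integral_contrapositive; split; apply pow_nonzero; lra. }
assert (Hratio : is_lim_seq (fun N => Rabs (u (S N) / u N)) r).
{ pose proof (is_lim_seq_mult' _ _ _ _ (is_lim_seq_succ_ratio_pow d) (is_lim_seq_const r)) as H.
  rewrite Rmult_1_l in H.
  eapply is_lim_seq_ext; [|exact H].
  intros N. cbv beta. pose proof (pos_INR N). unfold u. rewrite S_INR, Rabs_right.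
  - unfold Rdiv. rewrite Rpow_mult_distr, pow_inv. simpl pow.
    replace (INR N + 1 + 1) with (INR N + 2) by ring.
    field. split; apply pow_nonzero; lra.
  - apply Rle_ge, Rmult_le_pos.
    + apply Rmult_le_pos; apply pow_le; lra.
    + left. apply Rinv_0_lt_compat, Rmult_lt_0_compat; apply pow_lt; lra. }
apply is_lim_seq_abs_0, ex_series_lim_0.
exact (ex_series_DAlembert u r (proj2 Hr) Hu Hratio).
Qed.

Lemma is_lim_seq_gf_err (a b r : R) : 0 < r < 1 -> is_lim_seq (gf_err a b r) 0.
Proof.
intros Hr.
pose proof (is_lim_seq_scal_l _ (r * (26 * (Rabs a + Rabs b)) / (1 - r) ^ 3) _
  (is_lim_seq_pow_mul_geom 2 r Hr)) as H.
simpl in H. rewrite Rmult_0_r in H.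
eapply is_lim_seq_ext; [|exact H].
intros N. unfold gf_err. simpl pow. field. lra.
Qed.

Lemma is_lim_seq_RInt_unif (f : R -> R) (g : nat -> R -> R) (e : nat -> R) (a b : R) :
  a <= b -> ex_RInt f a b -> (forall N, ex_RInt (g N) a b) ->
  (forall N t, a <= t <= b -> Rabs (g N t - f t) <= e N) -> is_lim_seq e 0 ->
  is_lim_seq (fun N => RInt (g N) a b) (RInt f a b).
Proof.
intros Hab Hf Hg Hunif He.
assert (Hdist : forall N, Rabs (RInt (g N) a b - RInt f a b) <= (b - a) * e N).
{ intros N. change (RInt (g N) a b - RInt f a b) with (minus (RInt (g N) a b) (RInt f a b)).
  rewrite <- (RInt_minus _ _ _ _ (Hg N) Hf).
  apply abs_RInt_le_const; [exact Hab | apply ex_RInt_minus; auto |].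
  intros t Ht. exact (Hunif N t Ht). }
assert (Hlim : is_lim_seq (fun N => (b - a) * e N) 0).
{ pose proof (is_lim_seq_scal_l _ (b - a) _ He) as H.
  simpl in H. rewrite Rmult_0_r in H. exact H. }
apply is_lim_seq_le_le with (u := fun N => RInt f a b - (b - a) * e N)
                            (w := fun N => RInt f a b + (b - a) * e N).
- intros N. pose proof (Hdist N) as HN. apply Rabs_le_between in HN. lra.
- pose proof (is_lim_seq_minus' _ _ _ _ (is_lim_seq_const (RInt f a b)) Hlim) as H.
  rewrite Rminus_0_r in H. exact H.
- pose proof (is_lim_seq_plus' _ _ _ _ (is_lim_seq_const (RInt f a b)) Hlim) as H.
  rewrite Rplus_0_r in H. exact H.
Qed.

Lemma exp_pow (u : R) (n : nat) : exp u ^ n = exp (INR n * u).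
Proof.
induction n as [|n IH].
- simpl. rewrite Rmult_0_l, exp_0. reflexivity.
- rewrite S_INR. simpl pow. rewrite IH, <- exp_plus. f_equal. ring.
Qed.

Lemma pow_le_exp (z : R) (n : nat) : 0 <= z -> z ^ n <= exp (INR n * (z - 1)).
Proof.
intros Hz. rewrite <- exp_pow. apply pow_incr. split; [exact Hz|].
pose proof (exp_ineq1_le (z - 1)). lra.
Qed.

Lemma pow_mul_pow_le (n q : nat) (t : R) : (0 < n)%nat -> (0 < q)%nat -> 0 <= t <= 1 ->
  t ^ n * (1 - t) ^ q <= INR n ^ n * INR q ^ q / INR (n + q) ^ (n + q).
Proof.
intros Hn Hq Ht.
assert (Hn' : 0 < INR n) by (apply lt_0_INR; exact Hn).
assert (Hq' : 0 < INR q) by (apply lt_0_INR; exact Hq).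
rewrite pow_add, plus_INR.
set (s := INR n / (INR n + INR q)).
assert (Hsq : 1 - s = INR q / (INR n + INR q)) by (unfold s; field; lra).
assert (Hs : 0 < s /\ 0 < 1 - s).
{ rewrite Hsq. unfold s. split; apply Rdiv_lt_0_compat; lra. }
(* Bound each factor by [z^k <= exp (k (z - 1))]; the exponents cancel since [s = n / (n + q)]. *)
assert (Hexp : INR n * (t / s - 1) + INR q * ((1 - t) / (1 - s) - 1) = 0)
  by (rewrite Hsq; unfold s; field; lra).
assert (Hprod : (t / s) ^ n * ((1 - t) / (1 - s)) ^ q <= 1).
{ apply Rle_trans with (exp (INR n * (t / s - 1)) * exp (INR q * ((1 - t) / (1 - s) - 1))).
  - apply Rmult_le_compat; try (apply pow_le, Rdiv_le_0_compat; lra);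
      apply pow_le_exp, Rdiv_le_0_compat; lra.
  - rewrite <- exp_plus, Hexp, exp_0. lra. }
replace (INR n ^ n * INR q ^ q / ((INR n + INR q) ^ n * (INR n + INR q) ^ q))
  with (s ^ n * (1 - s) ^ q)
  by (rewrite Hsq; unfold s, Rdiv; rewrite !Rpow_mult_distr, !pow_inv; field;
      split; apply pow_nonzero; lra).
replace (t ^ n * (1 - t) ^ q) with ((t / s) ^ n * ((1 - t) / (1 - s)) ^ q * (s ^ n * (1 - s) ^ q))
  by (unfold Rdiv; rewrite !Rpow_mult_distr, !pow_inv; field; split; apply pow_nonzero; lra).
assert (0 <= s ^ n * (1 - s) ^ q) by (apply Rmult_le_pos; apply pow_le; lra).
nra.
Qed.

Definition weight (m n : nat) (t : R) : R := t ^ (n - 1) * (1 - t) ^ (m - n).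

Definition kernel (m n : nat) (x t : R) : R := t ^ n * (1 - t) ^ (m - n) * x.

Lemma T_fun_eq (m n : nat) (a b x t : R) :
  T_fun m n a b x t = weight m n t * x * gf a b (kernel m n x t).
Proof. unfold T_fun, weight, kernel, gf, Rdiv. ring. Qed.

Lemma is_RInt_S_term (m n : nat) (a b x : R) (k : nat) : (0 < n)%nat -> (n <= m)%nat ->
  is_RInt (fun t => weight m n t * x * (gf_coef a b k * kernel m n x t ^ k)) 0 1
    (S_term m n a b x (S k) / INR n).
Proof.
intros Hn Hnm.
assert (Hbeta := is_RInt_beta_binomial (n * S k) (m * S k) ltac:(lia) ltac:(nia)).
replace (n * S k - 1)%nat with (n - 1 + n * k)%nat in Hbeta by nia.
replace (m * S k - n * S k)%nat with (m - n + (m - n) * k)%nat in Hbeta by nia.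
replace (S_term m n a b x (S k) / INR n)
  with (gf_coef a b k * x ^ S k * / (INR (n * S k) * Binomial.C (m * S k) (n * S k))).
- apply (is_RInt_ext (fun t => gf_coef a b k * x ^ S k *
    (t ^ (n - 1 + n * k) * (1 - t) ^ (m - n + (m - n) * k)))).
  + intros t _. cbn -[pow]. unfold weight, kernel.
    rewrite !pow_add, !pow_mult, !Rpow_mult_distr. simpl pow. ring.
  + exact (is_RInt_scal _ _ _ _ _ Hbeta).
- unfold S_term, gf_coef. rewrite mult_INR, S_INR.
  assert (0 < INR n) by (apply lt_0_INR; lia).
  assert (0 <= INR k) by apply pos_INR.
  assert (Binomial.C (m * S k) (n * S k) <> 0).
  { unfold Binomial.C. apply Rmult_integral_contrapositive. split.
    - apply not_0_INR, fact_neq_0.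
    - apply Rinv_neq_0_compat, Rmult_integral_contrapositive; split; apply not_0_INR, fact_neq_0. }
  field. repeat split; lra.
Qed.

Lemma is_RInt_S_term_partial_sum (m n : nat) (a b x : R) (N : nat) :
  (0 < n)%nat -> (n <= m)%nat ->
  is_RInt (fun t => weight m n t * x * sum_n (fun k => gf_coef a b k * kernel m n x t ^ k) N) 0 1
    (sum_n (fun k => S_term m n a b x (S k)) N / INR n).
Proof.
intros Hn Hnm.
induction N as [|N IH].
- apply (is_RInt_ext (fun t => weight m n t * x * (gf_coef a b 0 * kernel m n x t ^ 0))).
  + intros t _. rewrite sum_O. reflexivity.
  + rewrite sum_O. apply is_RInt_S_term; assumption.
- apply (is_RInt_ext (fun t => plus
     (weight m n t * x * sum_n (fun k => gf_coef a b k * kernel m n x t ^ k) N)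
     (weight m n t * x * (gf_coef a b (S N) * kernel m n x t ^ S N)))).
  + intros t _. rewrite sum_Sn. cbn -[sum_n pow]. ring.
  + replace (sum_n (fun k => S_term m n a b x (S k)) (S N) / INR n)
      with (plus (sum_n (fun k => S_term m n a b x (S k)) N / INR n)
                 (S_term m n a b x (S (S N)) / INR n)).
    * exact (is_RInt_plus _ _ _ _ _ _ IH (is_RInt_S_term m n a b x (S N) Hn Hnm)).
    * rewrite sum_Sn. cbn -[sum_n S_term]. field. apply not_0_INR. lia.
Qed.

Lemma Rabs_kernel_le (m n : nat) (x : R) (t : R) : (0 < n)%nat -> (n < m)%nat -> 0 <= t <= 1 ->
  Rabs (kernel m n x t) <= Rabs x * (INR n ^ n * INR (m - n) ^ (m - n) / INR m ^ m).
Proof.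
intros Hn Hm Ht.
unfold kernel. rewrite Rabs_mult, Rmult_comm.
rewrite (Rabs_right (t ^ n * _)) by (apply Rle_ge, Rmult_le_pos; apply pow_le; lra).
apply Rmult_le_compat_l; [apply Rabs_pos|].
pose proof (pow_mul_pow_le n (m - n) t Hn ltac:(lia) Ht) as Hamgm.
replace (n + (m - n))%nat with m in Hamgm by lia.
exact Hamgm.
Qed.

Lemma Rabs_kernel_lt_1 (m n : nat) (x : R) : (0 < n)%nat -> (n < m)%nat ->
  Rabs x < INR m ^ m / (INR n ^ n * INR (m - n) ^ (m - n)) ->
  exists r, 0 < r < 1 /\ forall t, 0 <= t <= 1 -> Rabs (kernel m n x t) <= r.
Proof.
intros Hn Hm Hx.
assert (Hpos : forall k, (0 < k)%nat -> 0 < INR k ^ k) by (intros k Hk; apply pow_lt, lt_0_INR, Hk).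
assert (Hn' := Hpos n Hn). assert (Hq' := Hpos (m - n)%nat ltac:(lia)).
assert (Hm' := Hpos m ltac:(lia)).
set (c := INR n ^ n * INR (m - n) ^ (m - n) / INR m ^ m).
assert (Hc : 0 < c) by (apply Rdiv_lt_0_compat; [apply Rmult_lt_0_compat|]; assumption).
assert (Hxc : Rabs x * c < 1).
{ apply (Rmult_lt_compat_r c) in Hx; [|exact Hc].
  replace (INR m ^ m / (INR n ^ n * INR (m - n) ^ (m - n)) * c) with 1 in Hx; [exact Hx|].
  unfold c. field. lra. }
exists ((1 + Rabs x * c) / 2). split.
- pose proof (Rabs_pos x). nra.
- intros t Ht. pose proof (Rabs_kernel_le m n x t Hn Hm Ht) as Hk. fold c in Hk. lra.
Qed.

Lemma ex_RInt_T_fun (m n : nat) (a b x : R) :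
  (forall t, 0 <= t <= 1 -> Rabs (kernel m n x t) < 1) -> ex_RInt (T_fun m n a b x) 0 1.
Proof.
intros Hker.
apply (ex_RInt_continuous (V := R_CompleteNormedModule)).
rewrite Rmin_left, Rmax_right by lra. intros t Ht.
apply (ex_derive_continuous (V := R_NormedModule)).
pose proof (Hker t Ht) as Hkt. unfold kernel in Hkt. apply Rabs_lt_between in Hkt.
unfold T_fun. auto_derive.
replace (1 + - t) with (1 - t) by ring.
apply Rgt_not_eq. repeat apply Rmult_lt_0_compat; lra.
Qed.

Lemma Rabs_weight_le_1 (m n : nat) (t : R) : 0 <= t <= 1 -> Rabs (weight m n t) <= 1.
Proof.
intros Ht. unfold weight.
assert (Hpow : forall z k, 0 <= z <= 1 -> 0 <= z ^ k <= 1).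
{ intros z k Hz. split; [apply pow_le; lra|]. rewrite <- (pow1 k). apply pow_incr. exact Hz. }
rewrite Rabs_right.
- rewrite <- (Rmult_1_l 1). apply Rmult_le_compat; apply Hpow; lra.
- apply Rle_ge, Rmult_le_pos; apply Hpow; lra.
Qed.

Lemma Rabs_partial_sum_sub_T_fun_le (m n : nat) (a b x r t : R) (N : nat) :
  0 <= t <= 1 -> Rabs (kernel m n x t) <= r -> r < 1 ->
  Rabs (weight m n t * x * sum_n (fun k => gf_coef a b k * kernel m n x t ^ k) N
        - T_fun m n a b x t)
  <= Rabs x * gf_err a b r N.
Proof.
intros Ht Hker Hr.
rewrite T_fun_eq.
replace (weight m n t * x * sum_n (fun k => gf_coef a b k * kernel m n x t ^ k) N
         - weight m n t * x * gf a b (kernel m n x t))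
  with (- (weight m n t * x * (gf a b (kernel m n x t)
         - sum_n (fun k => gf_coef a b k * kernel m n x t ^ k) N))) by ring.
rewrite Rabs_Ropp, !Rabs_mult.
rewrite <- (Rmult_1_l (Rabs x * gf_err a b r N)), Rmult_assoc.
apply Rmult_le_compat; try apply Rmult_le_pos; try apply Rabs_pos.
- apply Rabs_weight_le_1, Ht.
- apply Rmult_le_compat_l; [apply Rabs_pos|].
  apply Rabs_gf_sub_partial_sum_le; assumption.
Qed.

Theorem proposition2p1 (m n : nat) (a b x : R) :
  (0 < n)%nat -> (n < m)%nat ->
  Rabs x < INR m ^ m / (INR n ^ n * INR (m - n)%nat ^ (m - n)%nat) ->
  ex_RInt (T_fun m n a b x) 0 1 /\
  is_series (fun k => S_term m n a b x (S k))
    (INR n * RInt (T_fun m n a b x) 0 1).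
Proof.
intros Hn Hm Hx.
destruct (Rabs_kernel_lt_1 m n x Hn Hm Hx) as (r & Hr & Hker).
assert (HT : ex_RInt (T_fun m n a b x) 0 1).
{ apply ex_RInt_T_fun. intros t Ht. specialize (Hker t Ht). lra. }
split; [exact HT|].
set (g := fun N t => weight m n t * x * sum_n (fun k => gf_coef a b k * kernel m n x t ^ k) N).
assert (Hg : forall N, is_RInt (g N) 0 1 (sum_n (fun k => S_term m n a b x (S k)) N / INR n))
  by (intros N; apply is_RInt_S_term_partial_sum; lia).
assert (Hlim : is_lim_seq (fun N => RInt (g N) 0 1) (RInt (T_fun m n a b x) 0 1)).
{ apply (is_lim_seq_RInt_unif _ _ (fun N => Rabs x * gf_err a b r N)).
  - lra.
  - exact HT.
  - intros N. eexists. apply Hg.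
  - intros N t Ht. apply Rabs_partial_sum_sub_T_fun_le; [exact Ht | apply Hker, Ht | lra].
  - pose proof (is_lim_seq_scal_l _ (Rabs x) _ (is_lim_seq_gf_err a b r Hr)) as H.
    simpl in H. rewrite Rmult_0_r in H. exact H. }
apply (is_lim_seq_scal_l _ (INR n)) in Hlim. simpl in Hlim.
change (is_lim_seq (sum_n (fun k => S_term m n a b x (S k))) (INR n * RInt (T_fun m n a b x) 0 1)).
eapply is_lim_seq_ext; [|exact Hlim].
intros N. cbv beta. rewrite (is_RInt_unique _ _ _ _ (Hg N)). field.
apply not_0_INR. lia.
Qed.
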